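(* Let $F:\mathcal{S}^{n\times n}\to\mathbb{R}$, $\boldsymbol{G}:\mathcal{S}^{n\times n}\to\mathbb{R}^q$, and let $\mathcal{C}\subseteq\mathbb{R}^n$ be closed. Consider the problems (P1) $\min F(\boldsymbol{X})$ subject to $\boldsymbol{G}(\boldsymbol{X})=\boldsymbol{0}$, $\boldsymbol{\lambda}(\boldsymbol{X})\in\mathcal{C}$, $\boldsymbol{X}\in\mathcal{S}^{n\times n}$; (P2) $\min f(\boldsymbol{Q},\boldsymbol{\lambda}):=F(\boldsymbol{Q}\operatorname{Diag}(\boldsymbol{\lambda})\boldsymbol{Q}^\top)$ subject to $\boldsymbol{G}(\boldsymbol{Q}\operatorname{Diag}(\boldsymbol{\lambda})\boldsymbol{Q}^\top)=\boldsymbol{0}$, $\boldsymbol{\lambda}\in\mathcal{C}$, $(\boldsymbol{Q},\boldsymbol{\lambda})\in\mathcal{O}(n,n)\times\mathbb{R}^n_\geq$. A matrix $\boldsymbol{X}^*\in\mathcal{S}^{n\times n}$ with pairwise distinct eigenvalues is a local minimum of (P1) if and only if one of its spectral decompositions $(\boldsymbol{Q}^*,\boldsymbol{\lambda}(\boldsymbol{X}^* ))$ (i.e. $\boldsymbol{Q}^*\in\mathcal{O}(n,n)$ with $\boldsymbol{X}^*=\boldsymbol{Q}^*\operatorname{Diag}(\boldsymbol{\lambda}(\boldsymbol{X}^* ))\boldsymbol{Q}^{*\top}$) is a local minimum of (P2). Furthermore, if one spectral decomposition of $\boldsymbol{X}^*$ is a local minimum of (P2), then all of its spectral decompositions are local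 minima of (P2).
   Context: $\mathcal{S}^{n\times n}$: real symmetric $n\times n$ matrices; $\mathcal{O}(n,n)$: real orthogonal $n\times n$ matrices; $\boldsymbol{\lambda}(\boldsymbol{X})$: eigenvalues of $\boldsymbol{X}$ in nonincreasing order; $\mathbb{R}^n_{\geq}=\{\boldsymbol{x}\in\mathbb{R}^n:x_1\ge\cdots\ge x_n\}$. Feasible sets: $\mathcal{X}_1=\{\boldsymbol{X}\in\mathcal{S}^{n\times n}:\boldsymbol{G}(\boldsymbol{X})=\boldsymbol{0},\ \boldsymbol{\lambda}(\boldsymbol{X})\in\mathcal{C}\}$ and $\mathcal{X}_2=\{(\boldsymbol{Q},\boldsymbol{\lambda})\in\mathcal{O}(n,n)\times\mathbb{R}^n_\geq:\boldsymbol{G}(\boldsymbol{Q}\operatorname{Diag}(\boldsymbol{\lambda})\boldsymbol{Q}^\top)=\boldsymbol{0},\ \boldsymbol{\lambda}\in\mathcal{C}\}$. $\boldsymbol{X}^*$ is a local minimum of (P1) if $\boldsymbol{X}^*\in\mathcal{X}_1$ and there is $\delta_1>0$ with $F(\boldsymbol{X}^* )\le F(\boldsymbol{X})$ for all $\boldsymbol{X}\in\mathcal{X}_1$ with $\|\boldsymbol{X}-\boldsymbol{X}^*\|_F\le\delta_1$. $(\boldsymbol{Q}^*,\boldsymbol{\lambda}^* )$ is a local minimum of (P2) if $(\boldsymbol{Q}^*,\boldsymbol{\lambda}^* )\in\mathcal{X}_2$ and there is $\delta_2>0$ with $f(\boldsymbol{Q}^*,\boldsymbol{\lambda}^* )\le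 f(\boldsymbol{Q},\boldsymbol{\lambda})$ for all $(\boldsymbol{Q},\boldsymbol{\lambda})\in\mathcal{X}_2$ with $\|\boldsymbol{Q}-\boldsymbol{Q}^*\|_F\le\delta_2$ and $\|\boldsymbol{\lambda}-\boldsymbol{\lambda}^*\|\le\delta_2$. *)

From HB Require Import structures.
From mathcomp Require Import all_boot all_order all_algebra.
From mathcomp Require Import all_classical all_reals all_analysis.
Set Implicit Arguments. Unset Strict Implicit. Unset Printing Implicit Defensive.
Import Order.TTheory GRing.Theory Num.Theory.
Import numFieldTopology.Exports numFieldNormedType.Exports.
Local Open Scope ring_scope.
Local Open Scope classical_set_scope.

Definition symmx (R : realType) (n : nat) (X : 'M[R]_n) : Prop := X^T = X.

Definition orthmx (R : realType) (n : nat) (Q : 'M[R]_n) : Prop :=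
  Q *m Q^T = 1%:M.

(* l \in R^n_>= : entries in nonincreasing order *)
Definition nonincr (R : realType) (n : nat) (l : 'rV[R]_n) : Prop :=
  forall i j : 'I_n, (i <= j)%N -> l 0 j <= l 0 i.

(* For a real symmetric
   matrix such a vector exists and is unique; otherwise the value is 0. *)
Definition eigvals (R : realType) (n : nat) (X : 'M[R]_n) : 'rV[R]_n :=
  xget 0 [set l : 'rV[R]_n | nonincr l /\
           char_poly X = \prod_(i < n) ('X - (l 0 i)%:P)].

Definition frob (R : realType) (m n : nat) (A : 'M[R]_(m, n)) : R :=
  Num.sqrt (\sum_(i < m) \sum_(j < n) A i j ^+ 2).

Definition feas1 (R : realType) (n q : nat) (G : 'M[R]_n -> 'rV[R]_q)
  (C : set 'rV[R]_n) (X : 'M[R]_n) : Prop :=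
  symmx X /\ G X = 0 /\ C (eigvals X).

Definition feas2 (R : realType) (n q : nat) (G : 'M[R]_n -> 'rV[R]_q)
  (C : set 'rV[R]_n) (Q : 'M[R]_n) (l : 'rV[R]_n) : Prop :=
  orthmx Q /\ nonincr l /\ G (Q *m diag_mx l *m Q^T) = 0 /\ C l.

Definition locmin1 (R : realType) (n q : nat) (F : 'M[R]_n -> R)
  (G : 'M[R]_n -> 'rV[R]_q) (C : set 'rV[R]_n) (Xs : 'M[R]_n) : Prop :=
  feas1 G C Xs /\
  exists d1 : R, 0 < d1 /\
    forall X : 'M[R]_n, feas1 G C X -> frob (X - Xs) <= d1 -> F Xs <= F X.

Definition fobj (R : realType) (n : nat) (F : 'M[R]_n -> R)
  (Q : 'M[R]_n) (l : 'rV[R]_n) : R := F (Q *m diag_mx l *m Q^T).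

Definition locmin2 (R : realType) (n q : nat) (F : 'M[R]_n -> R)
  (G : 'M[R]_n -> 'rV[R]_q) (C : set 'rV[R]_n)
  (Qs : 'M[R]_n) (ls : 'rV[R]_n) : Prop :=
  feas2 G C Qs ls /\
  exists d2 : R, 0 < d2 /\
    forall (Q : 'M[R]_n) (l : 'rV[R]_n), feas2 G C Q l ->
      frob (Q - Qs) <= d2 -> frob (l - ls) <= d2 ->
      fobj F Qs ls <= fobj F Q l.

Definition spec_decomp (R : realType) (n : nat) (X Q : 'M[R]_n) : Prop :=
  orthmx Q /\ X = Q *m diag_mx (eigvals X) *m Q^T.

(* If (Q, l) is feasible for (P2), then l is nonincreasing, so the sorted eigenvalue vector of
   Q Diag(l) Q^T is l itself and Q Diag(l) Q^T is feasible for (P1).  Since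
   (Q, l) |-> Q Diag(l) Q^T is locally Lipschitz, a local minimum Xs of (P1) pulls back to each
   of its spectral decompositions.
   Conversely, let X = Q Diag(mu) Q^T be feasible and close to Xs = Qs Diag(lam) Qs^T, and put
   P = Qs^T Q.  Then (lam_i - mu_j) P_ij = (Qs^T (Xs - X) Q)_ij is small.  Every row of the
   orthogonal matrix P has an entry of size at least 1/n, which matches lam_i with some
   mu_s(i); the eigenvalue gap of Xs and the two orderings force s = id, so P is close to a
   diagonal sign matrix S.  Then (Q S, mu) is a feasible point of (P2) close to (Qs, lam) that
   represents X, and minimality of (Qs, lam) gives F(Xs) <= F(X).
   Sorted spectral decompositions exist by Householder deflation at the largest eigenvalue,
   which is real because the Rayleigh quotient of a real symmetric matrix is real. *)

From HB Require Import structures.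
From mathcomp Require Import all_boot all_order all_algebra.
From mathcomp Require Import all_classical all_reals all_analysis.
From mathcomp Require Import complex polyrcf zify ring lra.
Import Order.TTheory GRing.Theory Num.Theory.
Import numFieldTopology.Exports numFieldNormedType.Exports.
Local Open Scope ring_scope.
Local Open Scope classical_set_scope.

Section SpectralLocalMinima.
Set Implicit Arguments.
Unset Strict Implicit.
Unset Printing Implicit Defensive.
Variable R : realType.

Lemma trmx_mul_orthmx n (Q : 'M[R]_n) : orthmx Q -> Q^T *m Q = 1%:M.
Proof. exact: mulmx1C. Qed.

Lemma orthmxT n (Q : 'M[R]_n) : orthmx Q -> orthmx Q^T.
Proof. by rewrite /orthmx trmxK; apply: trmx_mul_orthmx. Qed.

Lemma orthmxM n (P Q : 'M[R]_n) : orthmx P -> orthmx Q -> orthmx (P *m Q).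
Proof.
rewrite /orthmx trmx_mul => hP hQ.
by rewrite mulmxA -(mulmxA P) hQ mulmx1 hP.
Qed.

Lemma symmx_orth_diag n (Q : 'M[R]_n) (l : 'rV[R]_n) :
  symmx (Q *m diag_mx l *m Q^T).
Proof. by rewrite /symmx !trmx_mul trmxK tr_diag_mx mulmxA. Qed.

Lemma char_poly_orth_conj n (Q A : 'M[R]_n) : orthmx Q ->
  char_poly (Q *m A *m Q^T) = char_poly A.
Proof.
move=> hQ; rewrite /char_poly /char_poly_mx.
pose Qp : 'M[{poly R}]_n := map_mx polyC Q.
have hQp : Qp *m Qp^T = 1%:M by rewrite /Qp map_trmx -map_mxM hQ map_mx1.
have -> : map_mx polyC (Q *m A *m Q^T) = Qp *m map_mx polyC A *m Qp^T.
  by rewrite /Qp !map_mxM map_trmx.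
have {1}-> : ('X%:M : 'M[{poly R}]_n) = Qp *m 'X%:M *m Qp^T.
  by rewrite mul_mx_scalar -scalemxAl hQp scalemx1.
by rewrite -mulmxBl -mulmxBr !det_mulmx mulrAC -det_mulmx hQp det1 mul1r.
Qed.

Lemma nonincr_sorted n (l : 'rV[R]_n) : nonincr l ->
  sorted >=%R [seq l 0 i | i <- enum 'I_n].
Proof.
move=> hl; apply/(sortedP 0) => k; rewrite size_map size_enum_ord => hk.
have hk0 : (k < n)%N by apply: ltn_trans hk.
rewrite !(nth_map (Ordinal hk0)) -?enumT ?size_enum_ord //.
by apply: hl; rewrite !nth_enum_ord.
Qed.

Lemma nonincr_prod_XsubC_inj n (l m : 'rV[R]_n) : nonincr l -> nonincr m ->
  \prod_(i < n) ('X - (l 0 i)%:P) = \prod_(i < n) ('X - (m 0 i)%:P) -> l = m.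
Proof.
move=> hl hm.
have prodE (v : 'rV[R]_n) : \prod_(i < n) ('X - (v 0 i)%:P) =
    \prod_(x <- [seq v 0 i | i <- enum 'I_n]) ('X - x%:P).
  by rewrite big_map big_enum.
rewrite !prodE => /prod_XsubC_eq hperm.
have e : [seq l 0 i | i <- enum 'I_n] = [seq m 0 i | i <- enum 'I_n].
  apply: (sorted_eq _ _ (nonincr_sorted hl) (nonincr_sorted hm) hperm).
  - by move=> x y z hyx hzy; apply: le_trans hzy hyx.
  - by move=> x y; rewrite andbC => /le_anti.
apply/rowP => i; have := congr1 (nth 0 ^~ i) e.
by rewrite !(nth_map i) -?enumT ?size_enum_ord // !nth_ord_enum.
Qed.

Lemma eigvals_orth_diag n (Q : 'M[R]_n) (l : 'rV[R]_n) :
  orthmx Q -> nonincr l -> eigvals (Q *m diag_mx l *m Q^T) = l.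
Proof.
move=> hQ hl; rewrite /eigvals.
have hcp : char_poly (Q *m diag_mx l *m Q^T) = \prod_(i < n) ('X - (l 0 i)%:P).
  rewrite char_poly_orth_conj // char_poly_trig ?diag_mx_is_trig //.
  by apply: eq_bigr => i _; rewrite mxE eqxx.
case: xgetP => [m _ [hm hcm] | /(_ l) /=]; last by rewrite hcp => /(_ (conj hl erefl)).
by apply: nonincr_prod_XsubC_inj => //; rewrite -hcm hcp.
Qed.

(** * The spectral theorem for real symmetric matrices *)

Lemma symmx_real_eigenvalue n (A : 'M[R]_n.+1) : symmx A ->
  exists a : R, eigenvalue A a.
Proof.
move=> hA; pose f := real_complex R.
have [z /eigenvalueP [v hv vN0]] := eigenvalue_closed (map_mx f A) (ltn0Sn n).
have vA j : \sum_i v 0 i * f (A i j) = z * v 0 j.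
  move/rowP: hv => /(_ j); rewrite !mxE => <-.
  by apply: eq_bigr => i _; rewrite mxE.
(* The Rayleigh quotient v A v^* / v v^* of a real symmetric A is real. *)
pose N := \sum_j v 0 j * conjc (v 0 j).
pose T := \sum_j \sum_i v 0 i * f (A i j) * conjc (v 0 j).
have TE : T = z * N.
  rewrite /T /N mulr_sumr; apply: eq_bigr => j _.
  by rewrite mulrA -vA mulr_suml.
have T_real : conjc T = T.
  rewrite /T rmorph_sum /=.
  under eq_bigr => j _ do rewrite rmorph_sum /=.
  rewrite exchange_big /=; apply: eq_bigr => i _; apply: eq_bigr => j _.
  rewrite !rmorphM /= conjcK.
  have -> : Complex (A i j) (- 0) = f (A i j) by rewrite oppr0.
  have -> : A j i = A i j by rewrite -[in LHS]hA mxE.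
  by rewrite mulrC (mulrC (conjc (v 0 i))) mulrA.
have N_real : conjc N = N.
  rewrite /N rmorph_sum /=; apply: eq_bigr => j _.
  by rewrite rmorphM /= conjcK mulrC.
have N_neq0 : N != 0.
  apply/negP; rewrite /N psumr_eq0; last by move=> j _; apply: mulcJ_ge0.
  move=> /allP hall; apply/negP: vN0; rewrite negbK; apply/eqP/rowP => j.
  have := hall j (mem_index_enum j); rewrite implyTb mulf_eq0 conjc_eq0 orbb.
  by rewrite mxE => /eqP.
have z_real : conjc z = z.
  by apply: (mulIf N_neq0); rewrite -TE -{1}N_real -rmorphM /= -TE T_real.
have [a za] : exists a : R, z = f a.
  by move: z_real; case: (z) => a b [] hb; exists a; rewrite /f /=; congr Complex; lra.
exists a; rewrite -(eigenvalue_map f); apply/eigenvalueP; exists v => //.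
by rewrite za in hv.
Qed.

Lemma symmx_max_eigenvalue n (A : 'M[R]_n.+1) : symmx A ->
  exists a : R, eigenvalue A a /\ forall b, eigenvalue A b -> b <= a.
Proof.
move=> hA; have [a0 ha0] := symmx_real_eigenvalue hA.
have cp_neq0 : char_poly A != 0 by apply/monic_neq0/char_poly_monic.
have eigE x : eigenvalue A x = (x \in rootsR (char_poly A)).
  by rewrite eigenvalue_root_char -(roots_on_rootsR cp_neq0 x) in_itv.
pose a := \big[Num.max/a0]_(x <- rootsR (char_poly A)) x.
exists a; split.
  rewrite /a big_seq; apply: (big_ind (eigenvalue A)) => // [x y hx hy | x].
    by rewrite maxEle; case: ifP.
  by rewrite eigE.
by move=> b; rewrite eigE => hb; exact: (le_bigmax_seq _ _ xpredT id hb).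
Qed.

Lemma eigenvalue_orth_diag n (Q : 'M[R]_n) (d : 'rV[R]_n) j :
  orthmx Q -> eigenvalue (Q *m diag_mx d *m Q^T) (d 0 j).
Proof.
move=> hQ; apply/eigenvalueP; exists ('e_j *m Q^T).
  rewrite !mulmxA -(mulmxA _ Q^T) trmx_mul_orthmx // mulmx1.
  by rewrite -(rowE j (diag_mx d)) row_diag_mx scalemxAl.
apply/eqP => /(congr1 (mulmx^~ Q)).
rewrite -mulmxA trmx_mul_orthmx // mulmx1 mul0mx => /matrixP/(_ 0 j).
by rewrite !mxE !eqxx => /eqP; rewrite oner_eq0.
Qed.

Lemma mulmx_tr_row n (v : 'rV[R]_n) : (v *m v^T) 0 0 = \sum_i v 0 i ^+ 2.
Proof. by rewrite mxE; apply: eq_bigr => i _; rewrite mxE expr2. Qed.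

Lemma mulmx_tr_row_gt0 n (v : 'rV[R]_n) : v != 0 -> 0 < (v *m v^T) 0 0.
Proof.
move=> vN0; rewrite mulmx_tr_row lt_def sumr_ge0 ?andbT => [|i _]; last exact: sqr_ge0.
rewrite psumr_eq0 => [|i _]; last exact: sqr_ge0.
apply: contra vN0 => /allP v0; apply/eqP/rowP => j.
by have := v0 j (mem_index_enum j); rewrite sqrf_eq0 mxE => /eqP.
Qed.

Lemma unit_eigenvector n (A : 'M[R]_n) (a : R) : eigenvalue A a ->
  exists u : 'rV[R]_n, u *m u^T = 1%:M /\ u *m A = a *: u.
Proof.
move=> /eigenvalueP [v hv /mulmx_tr_row_gt0 s_gt0].
exists ((Num.sqrt ((v *m v^T) 0 0))^-1 *: v); split.
  rewrite linearZ /= -scalemxAl -scalemxAr scalerA.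
  apply/matrixP => i j; rewrite !ord1 [LHS]mxE [RHS]mxE eqxx mulr1n.
  by rewrite -expr2 exprVn sqr_sqrtr ?ltW // mulVf ?gt_eqF.
by rewrite -scalemxAl hv !scalerA mulrC.
Qed.

(* The Householder reflection through the hyperplane orthogonal to e_0 - u. *)
Lemma householder n (u : 'rV[R]_n.+1) : u *m u^T = 1%:M ->
  exists H : 'M[R]_n.+1, [/\ H^T = H, H *m H = 1%:M & 'e_0 *m H = u].
Proof.
move=> hu; set e : 'rV[R]_n.+1 := 'e_0.
have [-> | u_neq_e] := eqVneq u e.
  by exists 1%:M; split; rewrite ?trmx1 ?mulmx1.
have ee : e *m e^T = 1%:M by apply/matrixP => i j; rewrite !ord1 -rowE !mxE.
have eu : e *m u^T = (u 0 0)%:M by apply/matrixP => i j; rewrite !ord1 -rowE !mxE.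
have ue : u *m e^T = (u 0 0)%:M by rewrite -[LHS]trmxK trmx_mul trmxK eu tr_scalar_mx.
pose w := e - u; pose c := 2 - 2 * u 0 0.
have ww : w *m w^T = c%:M.
  rewrite /w linearB /= mulmxBl !mulmxBr ee eu ue hu.
  by apply/matrixP => i j; rewrite !ord1 !mxE /= !mulr1n /c; lra.
have c_neq0 : c != 0.
  have : w != 0 by rewrite subr_eq0 eq_sym.
  by move=> /mulmx_tr_row_gt0; rewrite ww mxE mulr1n => /gt_eqF ->.
have c_eq : c = 2 * (1 - u 0 0) by rewrite /c; ring.
pose W := w^T *m w.
have WW : W *m W = c *: W.
  by rewrite /W mulmxA -(mulmxA w^T) ww mul_mx_scalar -scalemxAl.
exists (1%:M - (2 / c) *: W); split.
- by rewrite linearB linearZ /= trmx1 /W trmx_mul trmxK.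
- rewrite mulmxBl !mulmxBr mulmx1 -!scalemxAl mul1mx -scalemxAr WW !scalerA mulmx1.
  have -> : 2 / c * (2 / c) * c = 2 / c + 2 / c by field.
  by rewrite scalerDl opprB addrK subrK.
- have ew : e *m w^T = (1 - u 0 0)%:M.
    rewrite /w linearB /= mulmxBr ee eu.
    by apply/matrixP => i j; rewrite !ord1 !mxE /= !mulr1n.
  rewrite mulmxBr mulmx1 -scalemxAr /W mulmxA ew mul_scalar_mx scalerA.
  have -> : 2 / c * (1 - u 0 0) = 1.
    by rewrite c_eq; field; move: c_neq0; rewrite c_eq mulf_eq0 negb_or => /andP[].
  by rewrite scale1r /w opprB addrC subrK.
Qed.

Lemma nonincr_row_mx n (a : R) (d : 'rV[R]_n) :
  nonincr d -> (forall k, d 0 k <= a) -> nonincr (row_mx (a%:M : 'rV[R]_1) d).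
Proof.
move=> hd ha i j hij.
case: (splitP i) => [i0 ei | i' ei]; case: (splitP j) => [j0 ej | j' ej].
- by have -> : i = j by apply/val_inj; rewrite /= ei ej !ord1.
- have -> : j = rshift 1 j' by apply/val_inj.
  have -> : i = lshift n i0 by apply/val_inj.
  by rewrite row_mxEr row_mxEl !ord1 mxE eqxx mulr1n.
- by move: hij; rewrite ei ej ord1.
- have -> : j = rshift 1 j' by apply/val_inj.
  have -> : i = rshift 1 i' by apply/val_inj.
  by rewrite !row_mxEr; apply: hd; move: hij; rewrite ei ej.
Qed.

(* Deflation at the largest eigenvalue keeps the diagonal sorted. *)
Theorem symmx_spectral n (A : 'M[R]_n) : symmx A ->
  exists Q : 'M[R]_n, exists d : 'rV[R]_n,
    [/\ orthmx Q, nonincr d & A = Q *m diag_mx d *m Q^T].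
Proof.
elim: n A => [|n IH] A hA.
  exists 1%:M, 0; split; first by rewrite /orthmx trmx1 mulmx1.
    by move=> [].
  by apply/matrixP => [[]].
have [a [ha a_max]] := symmx_max_eigenvalue hA.
have [u [hu hua]] := unit_eigenvector ha.
have [H [hHT hHH hHe]] := householder hu.
have hH : orthmx H by rewrite /orthmx hHT.
pose B : 'M[R]_(1 + n) := H *m A *m H.
have hBT : B^T = B by rewrite /B !trmx_mul hHT hA mulmxA.
have hAB : A = H *m B *m H by rewrite /B !mulmxA hHH mul1mx -mulmxA hHH mulmx1.
have hB0 : ('e_0 : 'rV[R]_n.+1) *m B = a *: 'e_0.
  by rewrite /B !mulmxA hHe hua -!scalemxAl -hHe -mulmxA hHH mulmx1.
clearbody B.
have B0j j : B 0 j = a * (j == 0)%:R by move/rowP: hB0 => /(_ j); rewrite -rowE !mxE eqxx.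
have Bi0 i : B i 0 = a * (i == 0)%:R by rewrite -B0j -[in LHS]hBT mxE.
have l0 : lshift n (0 : 'I_1) = 0 :> 'I_n.+1 by apply/val_inj.
have r0 (j : 'I_n) : (rshift 1 j == 0 :> 'I_n.+1) = false by [].
pose A' := drsubmx B.
have hBblk : B = block_mx (a%:M : 'M[R]_1) 0 0 A'.
  rewrite -[LHS]submxK; congr block_mx; apply/matrixP => i j; rewrite !mxE ?ord1.
  - by rewrite l0 B0j eqxx mulr1 mulr1n.
  - by rewrite l0 B0j r0 mulr0.
  - by rewrite l0 Bi0 r0 mulr0.
have hA' : symmx A' by rewrite /symmx trmx_drsub hBT.
have [Q' [d' [hQ' hd' eA']]] := IH A' hA'.
pose P : 'M[R]_(1 + n) := block_mx 1%:M 0 0 Q'.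
pose d : 'rV[R]_(1 + n) := row_mx (a%:M : 'rV[R]_1) d'.
have hP : orthmx P.
  rewrite /orthmx /P tr_block_mx !trmx0 trmx1 mulmx_block.
  by rewrite !mulmx0 !mul0mx !addr0 !add0r mulmx1 hQ' scalar_mx_block.
have eB : B = P *m diag_mx d *m P^T.
  have diag1 : diag_mx (a%:M : 'rV[R]_1) = a%:M.
    by apply/matrixP => i j; rewrite !ord1 !mxE.
  rewrite hBblk /P /d diag_mx_row diag1 tr_block_mx !trmx0 trmx1 !mulmx_block.
  by rewrite !mulmx0 !mul0mx !addr0 !add0r mulmx1 mul1mx !mul0mx -eA'.
have eA : A = (H *m P) *m diag_mx d *m (H *m P)^T.
  by rewrite {1}hAB eB trmx_mul hHT !mulmxA.
exists (H *m P), d; split => //; first exact: orthmxM.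
apply: nonincr_row_mx => // k; apply: a_max.
have := eigenvalue_orth_diag d (rshift 1 k) (orthmxM hH hP).
by rewrite -eA /d row_mxEr.
Qed.

Lemma symmx_spec_decomp n (X : 'M[R]_n) : symmx X ->
  nonincr (eigvals X) /\ exists Q, spec_decomp X Q.
Proof.
move=> hX; have [Q [d [hQ hd eX]]] := symmx_spectral hX.
have ed : eigvals X = d by rewrite eX eigvals_orth_diag.
by rewrite ed; split => //; exists Q; rewrite /spec_decomp ed.
Qed.

Lemma ler_sum_term (I : finType) (F : I -> R) i :
  (forall j, 0 <= F j) -> F i <= \sum_j F j.
Proof. by move=> F_ge0; rewrite (bigD1 i) //= lerDl sumr_ge0. Qed.

Lemma normr_le_frob m n (A : 'M[R]_(m, n)) i j : `|A i j| <= frob A.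
Proof.
have sqr_sum_ge0 k : 0 <= \sum_(l < n) A k l ^+ 2 by apply: sumr_ge0 => l _; apply: sqr_ge0.
rewrite /frob -sqrtr_sqr ler_sqrt; last by apply: sumr_ge0 => k _.
apply: le_trans _ (ler_sum_term i sqr_sum_ge0).
by apply: (ler_sum_term (F := fun l => A i l ^+ 2)) => l; apply: sqr_ge0.
Qed.

Lemma frob_le m n (A : 'M[R]_(m, n)) b : 0 <= b ->
  (forall i j, `|A i j| <= b) -> frob A <= (m * n)%:R * b.
Proof.
move=> b_ge0 hA; have mnb_ge0 : 0 <= (m * n)%:R * b :> R by rewrite mulr_ge0.
rewrite /frob -(ger0_norm mnb_ge0) -sqrtr_sqr ler_sqrt ?sqr_ge0 //.
apply: (@le_trans _ _ (\sum_(i < m) \sum_(j < n) b ^+ 2)).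
  apply: ler_sum => i _; apply: ler_sum => j _.
  by rewrite -real_normK ?num_real // lerXn2r ?nnegrE ?hA.
rewrite !sumr_const !card_ord -mulrnA -mulr_natl mulnC.
have : (m * n)%:R <= ((m * n)%:R) ^+ 2 :> R.
  by rewrite -natrX ler_nat; case: (m * n)%N => // k; rewrite expnS leq_pmulr.
have := sqr_ge0 b; nra.
Qed.

Lemma mulmx_entry_le m n p (A : 'M[R]_(m, n)) (B : 'M[R]_(n, p)) a b :
  (forall i k, `|A i k| <= a) -> (forall k j, `|B k j| <= b) ->
  forall i j, `|(A *m B) i j| <= n%:R * (a * b).
Proof.
move=> hA hB i j; rewrite mxE; apply: le_trans (ler_norm_sum _ _ _) _.
apply: (@le_trans _ _ (\sum_(k < n) a * b)).
  by apply: ler_sum => k _; rewrite normrM ler_pM.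
by rewrite sumr_const card_ord mulr_natl.
Qed.

Lemma diag_mx_entry_le n (l : 'rV[R]_n) b : 0 <= b ->
  (forall k, `|l 0 k| <= b) -> forall i j, `|diag_mx l i j| <= b.
Proof.
by move=> b_ge0 hl i j; rewrite mxE; case: (i == j); rewrite ?mulr1n ?mulr0n ?normr0.
Qed.

Lemma orthmx_row_sqr_sum n (Q : 'M[R]_n) i : orthmx Q -> \sum_j Q i j ^+ 2 = 1.
Proof.
move=> /(congr1 (fun M : 'M[R]_n => M i i)); rewrite !mxE eqxx mulr1n => <-.
by apply: eq_bigr => j _; rewrite mxE expr2.
Qed.

Lemma orthmx_entry_le1 n (Q : 'M[R]_n) i j : orthmx Q -> `|Q i j| <= 1.
Proof.
move=> hQ; rewrite -[1]sqrtr1 -sqrtr_sqr ler_sqrt ?ler01 // -(orthmx_row_sqr_sum i hQ).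
by apply: (ler_sum_term (F := fun l => Q i l ^+ 2)) => l; apply: sqr_ge0.
Qed.

Lemma trmx_orthmx_entry_le1 n (Q : 'M[R]_n) i j : orthmx Q -> `|Q^T i j| <= 1.
Proof. by rewrite mxE; apply: orthmx_entry_le1. Qed.

(** * Local minima of (P1) give local minima of (P2) *)

Lemma orth_diag_entry_lipschitz n (Q Qs : 'M[R]_n) (l lam : 'rV[R]_n) (L del : R) :
  orthmx Q -> orthmx Qs -> 0 <= del <= 1 -> (forall k, `|lam 0 k| <= L) ->
  (forall i j, `|(Q - Qs) i j| <= del) -> (forall k, `|(l - lam) 0 k| <= del) ->
  forall i j, `|(Q *m diag_mx l *m Q^T - Qs *m diag_mx lam *m Qs^T) i j|
                <= n%:R ^+ 2 * ((2 * L + 2) * del).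
Proof.
move=> hQ hQs /andP[del_ge0 del_le1] hlam hdQ hdl i j.
have L_ge0 : 0 <= L := le_trans (normr_ge0 _) (hlam (Ordinal (ltn_ord i))).
have hl k : `|l 0 k| <= L + 1.
  have := ler_normD (l 0 k - lam 0 k) (lam 0 k); rewrite subrK.
  by have := hdl k; have := hlam k; rewrite !mxE; lra.
have hdQT i' j' : `|(Q - Qs)^T i' j'| <= del by rewrite mxE.
have eX : Q *m diag_mx l *m Q^T - Qs *m diag_mx lam *m Qs^T =
    (Q - Qs) *m (diag_mx l *m Q^T) + Qs *m (diag_mx (l - lam) *m Q^T)
    + Qs *m diag_mx lam *m (Q - Qs)^T.
  rewrite !linearB /= !(mulmxBl, mulmxBr) !mulmxA.
  by rewrite !addrA subrK subrK.
have hQs1 i' j' := orthmx_entry_le1 i' j' hQs.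
have hQT1 i' j' := trmx_orthmx_entry_le1 i' j' hQ.
have b1 := mulmx_entry_le hdQ
  (mulmx_entry_le (diag_mx_entry_le (ler_wpDr ler01 L_ge0) hl) hQT1) i j.
have b2 := mulmx_entry_le hQs1 (mulmx_entry_le (diag_mx_entry_le del_ge0 hdl) hQT1) i j.
have b3 := mulmx_entry_le (mulmx_entry_le hQs1 (diag_mx_entry_le L_ge0 hlam)) hdQT i j.
have normD3 (A B C : 'M[R]_n) : `|(A + B + C) i j| <= `|A i j| + `|B i j| + `|C i j|.
  rewrite !mxE; apply: le_trans (ler_normD _ _) _.
  by rewrite lerD2r ler_normD.
rewrite eX; apply: le_trans (normD3 _ _ _) _.
have -> : n%:R ^+ 2 * ((2 * L + 2) * del) = n%:R * (del * (n%:R * ((L + 1) * 1)))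
  + n%:R * (1 * (n%:R * (del * 1))) + n%:R * ((n%:R * (1 * L)) * del) by ring.
by rewrite !lerD.
Qed.

Lemma locmin1_locmin2 n q (F : 'M[R]_n -> R) (G : 'M[R]_n -> 'rV[R]_q)
    (C : set 'rV[R]_n) (Xs Qs : 'M[R]_n) :
  locmin1 F G C Xs -> spec_decomp Xs Qs -> locmin2 F G C Qs (eigvals Xs).
Proof.
move=> [[hsym [hG hC]] [d1 [d1_gt0 hmin]]] [hQs eXs].
have [hlam _] := symmx_spec_decomp hsym.
move: hlam eXs hC; set lam := eigvals Xs => hlam eXs hC.
split; first by do 3!split => //; rewrite -eXs.
pose L := \sum_k `|lam 0 k|.
have hL k : `|lam 0 k| <= L by apply: (ler_sum_term (F := fun k => `|lam 0 k|)).
have L_ge0 : 0 <= L by apply: sumr_ge0.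
pose K := n%:R ^+ 4 * (2 * L + 2) + 1.
have K_gt0 : 0 < K by rewrite /K ltr_pwDr // mulr_ge0 ?exprn_ge0 // addr_ge0 ?mulr_ge0.
pose del := Num.min 1 (d1 / K).
have del_gt0 : 0 < del by rewrite lt_min ltr01 divr_gt0.
have del_le1 : del <= 1 by rewrite ge_min lexx.
have delK : del * K <= d1 by rewrite -ler_pdivlMr // ge_min lexx orbT.
exists del; split => // Q l [hQ [hl [hGQ hCl]]] hdQ hdl.
rewrite /fobj -eXs; apply: hmin.
  by split; [exact: symmx_orth_diag | rewrite eigvals_orth_diag].
have hdQ' i j : `|(Q - Qs) i j| <= del := le_trans (normr_le_frob _ i j) hdQ.
have hdl' k : `|(l - lam) 0 k| <= del := le_trans (normr_le_frob _ 0 k) hdl.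
have hdel : 0 <= del <= 1 by rewrite ltW.
rewrite eXs; apply: le_trans (frob_le _ (orth_diag_entry_lipschitz hQ hQs hdel hL hdQ' hdl')) _.
  by rewrite !mulr_ge0 ?exprn_ge0 // ?addr_ge0 ?mulr_ge0 // ltW.
apply: le_trans delK; rewrite natrM /K.
have : 0 <= n%:R ^+ 4 * (2 * L + 2) * del :> R.
  by rewrite !mulr_ge0 ?exprn_ge0 ?addr_ge0 ?mulr_ge0 // ltW.
set N : R := n%:R; nra.
Qed.

(** * Perturbation of eigenvectors and the converse *)

Lemma ord_incr_ge n (s : 'I_n -> 'I_n) :
  (forall i k : 'I_n, (i < k)%N -> (s i < s k)%N) -> forall i : 'I_n, (i <= s i)%N.
Proof.
move=> s_incr [i hi]; elim: i hi => [//|i IH] hi.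
have hi' : (i < n)%N := ltnW hi.
by have := IH hi'; have := s_incr (Ordinal hi') (Ordinal hi) (ltnSn i); rewrite /=; lia.
Qed.

Lemma ord_incr_id n (s : 'I_n -> 'I_n) :
  (forall i k : 'I_n, (i < k)%N -> (s i < s k)%N) -> forall i, s i = i.
Proof.
move=> s_incr i; apply/val_inj/eqP; rewrite eqn_leq (ord_incr_ge s_incr) andbT.
pose s' j := rev_ord (s (rev_ord j)).
have s'_incr (j k : 'I_n) : (j < k)%N -> (s' j < s' k)%N.
  move=> hjk; have := s_incr (rev_ord k) (rev_ord j); rewrite /s' /=.
  by have := ltn_ord k; have := ltn_ord (s (rev_ord j)); have := ltn_ord (s (rev_ord k)); lia.
have := ord_incr_ge s'_incr (rev_ord i); rewrite /s' /= rev_ordK.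
by have := ltn_ord (s i); lia.
Qed.

Lemma distinct_entries_gap n (l : 'rV[R]_n) :
  (forall i j, l 0 i = l 0 j -> i = j) ->
  exists2 g : R, 0 < g & forall i j, i != j -> g <= `|l 0 i - l 0 j|.
Proof.
move=> l_inj.
exists (\big[Num.min/1]_(p : 'I_n * 'I_n | p.1 != p.2) `|l 0 p.1 - l 0 p.2|).
  apply: (big_ind (fun x => 0 < x)) => // [x y hx hy | [i j] /= hij].
    by rewrite lt_min hx hy.
  by rewrite normr_gt0 subr_eq0; apply: contra hij => /eqP /l_inj ->.
by move=> i j hij; rewrite (bigD1 (i, j)) //= ge_min lexx.
Qed.

Lemma orthmx_row_large_entry n (P : 'M[R]_n) i :
  orthmx P -> exists j, n%:R^-1 <= `|P i j|.
Proof.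
move=> hP; apply/existsP; apply: contraT => /existsPn small.
have n_gt0 : (0 < n)%N by apply: leq_ltn_trans (ltn_ord i).
have : \sum_j P i j ^+ 2 < \sum_(j < n) n%:R^-1.
  apply: ltr_sum; first by apply/hasP; exists (Ordinal n_gt0); rewrite ?mem_index_enum.
  move=> j _; apply: le_lt_trans (_ : `|P i j| < _); last by rewrite ltNge small.
  rewrite -real_normK ?num_real // expr2 ler_piMl ?normr_ge0 //.
  exact: orthmx_entry_le1.
rewrite orthmx_row_sqr_sum // sumr_const card_ord -[_^-1 *+ n]mulr_natr.
by rewrite mulVf ?ltxx // pnatr_eq0 -lt0n.
Qed.

Lemma matched_values_order (li lk mi mk e g : R) : 0 < g -> e <= g / 4 ->
  g <= li - lk -> `|li - mi| <= e -> `|lk - mk| <= e -> mk < mi.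
Proof. by move=> g_gt0 eg gap; rewrite !ler_norml; lra. Qed.

Lemma matched_offdiag_le (li lj mj e eps g p : R) : 0 < g -> e <= g / 4 ->
  g <= `|li - lj| -> `|lj - mj| <= e -> `|li - mj| * p <= eps -> 0 <= p ->
  p <= 2 * eps / g.
Proof.
move=> g_gt0 eg gap close hp p_ge0.
have : `|li - lj| <= `|li - mj| + `|lj - mj| by rewrite (distrC lj); apply: ler_distD.
rewrite ler_pdivlMr //; nra.
Qed.

Lemma diag_defect_le (a s eta N : R) : `|a| <= 1 -> a ^+ 2 + s = 1 ->
  s <= N * eta ^+ 2 -> N * eta <= 1 / 2 -> 0 <= eta -> 1 - `|a| <= eta.
Proof.
move=> a_le1 row s_le N_eta eta_ge0.
have : a ^+ 2 <= `|a| by rewrite -real_normK ?num_real // expr2 ler_piMl.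
rewrite expr2 mulrA in s_le; nra.
Qed.

Lemma perturbation_scale (g d N : R) : 0 < g -> 0 < d -> 1 <= N ->
  exists2 eps : R, 0 < eps &
    [/\ N * eps <= g / 4, N * (N * (N * (2 * eps / g))) <= d & N * (N * eps) <= d].
Proof.
move=> g_gt0 d_gt0 N_ge1.
have N_gt0 : 0 < N by lra.
pose c := 4 * N ^+ 3 * (1 + g) * (1 + d).
have c_gt0 : 0 < c by rewrite /c !mulr_gt0 ?exprn_gt0 //; lra.
exists (g * d / c); first exact: divr_gt0 (mulr_gt0 g_gt0 d_gt0) c_gt0.
have N2 : 1 <= N ^+ 2 by rewrite expr2; nra.
have gd_ge1 : 1 <= (1 + g) * (1 + d) by nra.
split.
- have -> : N * (g * d / c) = g / 4 * (d / (N ^+ 2 * ((1 + g) * (1 + d)))).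
    by rewrite /c; field; rewrite ?lt0r_neq0 //; lra.
  rewrite ler_piMr ?divr_ge0 //; try lra.
  rewrite ler_pdivrMr ?mul1r ?mulr_gt0 //; try lra.
  by apply: le_trans (_ : d <= 1 * (1 + d)) _; [lra | apply: ler_pM => //; nra].
- have -> : N * (N * (N * (2 * (g * d / c) / g))) = d / (2 * ((1 + g) * (1 + d))).
    by rewrite /c; field; rewrite ?lt0r_neq0 //; lra.
  by rewrite ler_pdivrMr ?mulr_gt0 //; try lra; nra.
- have -> : N * (N * (g * d / c)) = d * (g / (4 * N * ((1 + g) * (1 + d)))).
    by rewrite /c; field; rewrite ?lt0r_neq0 //; lra.
  rewrite ler_piMr //; try lra.
  by rewrite ler_pdivrMr ?mul1r ?mulr_gt0 //; try lra; nra.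
Qed.

Section EigenvectorPerturbation.
Variables (n : nat) (lam mu : 'rV[R]_n) (P : 'M[R]_n) (g eps : R).
Hypotheses (hP : orthmx P) (hlam : nonincr lam) (hmu : nonincr mu) (g_gt0 : 0 < g).
Hypothesis lam_gap : forall i j : 'I_n, i != j -> g <= `|lam 0 i - lam 0 j|.
Hypothesis hPeps : forall i j, `|lam 0 i - mu 0 j| * `|P i j| <= eps.
Hypothesis eps_small : n%:R * eps <= g / 4.

Lemma perturbed_eigvals_close i : `|lam 0 i - mu 0 i| <= n%:R * eps.
Proof.
have n_gt0 : 0 < n%:R :> R by rewrite ltr0n; apply: leq_ltn_trans (ltn_ord i).
have [s hs] := boolp.choice (fun k => orthmx_row_large_entry k hP).
have close k : `|lam 0 k - mu 0 (s k)| <= n%:R * eps.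
  rewrite -ler_pdivrMl //; apply: le_trans (hPeps k (s k)).
  by rewrite mulrC ler_wpM2l.
(* Each lam_k is matched with mu_(s k); the gap and both orderings force s = id. *)
have s_incr (j k : 'I_n) : (j < k)%N -> (s j < s k)%N.
  move=> hjk; have := lam_gap (negbT (ltn_eqF hjk)).
  rewrite ger0_norm ?subr_ge0; last exact: hlam (ltnW hjk).
  move=> gap; have lt_mu := matched_values_order g_gt0 eps_small gap (close j) (close k).
  by rewrite ltnNge; apply/negP => /hmu; rewrite leNgt lt_mu.
by have := close i; rewrite ord_incr_id.
Qed.

Lemma perturbed_offdiag_small (i j : 'I_n) : i != j -> `|P i j| <= 2 * eps / g.
Proof.
move=> hij; apply: (matched_offdiag_le g_gt0 eps_small (lam_gap hij)).
- exact: perturbed_eigvals_close.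
- exact: hPeps.
- exact: normr_ge0.
Qed.

Lemma perturbed_sign_fix : exists S : 'M[R]_n,
  [/\ orthmx S, S *m diag_mx mu *m S^T = diag_mx mu
    & forall i j, `|(P *m S - 1%:M) i j| <= 2 * eps / g].
Proof.
pose sgn i : R := if 0 <= P i i then 1 else -1.
have sgn2 i : sgn i * sgn i = 1 by rewrite /sgn; case: ifP; rewrite ?mulrNN mulr1.
have sgnP i : P i i * sgn i = `|P i i|.
  rewrite /sgn; case: ifP => [/ger0_norm -> | /negbT]; rewrite ?mulr1 //.
  by rewrite -ltNge => /ltr0_norm ->; rewrite mulrN1.
pose sv : 'rV[R]_n := \row_i sgn i.
exists (diag_mx sv); split.
- rewrite /orthmx tr_diag_mx mulmx_diag; apply/matrixP => i j; rewrite !mxE.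
  by case: (i == j); rewrite ?mulr1n ?mulr0n ?sgn2.
- rewrite tr_diag_mx !mulmx_diag; congr diag_mx; apply/rowP => i; rewrite !mxE.
  by rewrite mulrAC sgn2 mul1r.
move=> i j; rewrite mul_mx_diag !mxE.
have eps_ge0 : 0 <= eps by apply: le_trans (hPeps i j); rewrite mulr_ge0.
have eta_ge0 : 0 <= 2 * eps / g by rewrite divr_ge0 ?mulr_ge0 // ltW.
have [<- | hij] := eqVneq i j; last first.
  have := perturbed_offdiag_small hij; rewrite mulr0n subr0 normrM.
  have -> : `|sgn j| = 1 by rewrite /sgn; case: ifP; rewrite ?normrN normr1.
  by rewrite mulr1.
(* 1 - |P_ii| <= 1 - P_ii^2, the off-diagonal mass of row i. *)
rewrite mulr1n sgnP distrC ger0_norm ?subr_ge0 ?orthmx_entry_le1 //.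
have Pii_le1 := orthmx_entry_le1 i i hP.
have := orthmx_row_sqr_sum i hP; rewrite (bigD1 i) //= => row_sum.
have offdiag : \sum_(j | j != i) P i j ^+ 2 <= n%:R * (2 * eps / g) ^+ 2.
  apply: (@le_trans _ _ (\sum_(j < n) (2 * eps / g) ^+ 2)); last first.
    by rewrite sumr_const card_ord [leRHS]mulr_natl.
  rewrite [leRHS](bigD1 i) //= -[leLHS]add0r lerD ?sqr_ge0 //.
  apply: ler_sum => k hk; rewrite -real_normK ?num_real // lerXn2r ?nnegrE //.
  by apply: perturbed_offdiag_small; rewrite eq_sym.
have n_eta : n%:R * (2 * eps / g) <= 1 / 2.
  rewrite mulrA ler_pdivrMr // mulrCA.
  by apply: le_trans (ler_wpM2l _ eps_small) _; lra.
exact: diag_defect_le Pii_le1 row_sum offdiag n_eta eta_ge0.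
Qed.

End EigenvectorPerturbation.

Lemma orth_diag_sub_entry n (Qs Q : 'M[R]_n) (lam mu : 'rV[R]_n) i j :
  orthmx Qs -> orthmx Q ->
  (lam 0 i - mu 0 j) * (Qs^T *m Q) i j =
  (Qs^T *m (Qs *m diag_mx lam *m Qs^T - Q *m diag_mx mu *m Q^T) *m Q) i j.
Proof.
move=> hQs hQ; rewrite mulmxBr mulmxBl !mulmxA trmx_mul_orthmx // mul1mx.
rewrite -(mulmxA _ Q^T) trmx_mul_orthmx // mulmx1 -!mulmxA mul_diag_mx.
by rewrite mulmxA mul_mx_diag !mxE; ring.
Qed.

Lemma locmin2_locmin1 n q (F : 'M[R]_n -> R) (G : 'M[R]_n -> 'rV[R]_q)
    (C : set 'rV[R]_n) (Xs Qs : 'M[R]_n) :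
  symmx Xs -> (forall i j, eigvals Xs 0 i = eigvals Xs 0 j -> i = j) ->
  spec_decomp Xs Qs -> locmin2 F G C Qs (eigvals Xs) -> locmin1 F G C Xs.
Proof.
move=> hsym hdist [hQs eXs] [[_ [hlam [hG hC]]] [d2 [d2_gt0 hmin]]].
move: hdist hlam eXs hG hC hmin; set lam := eigvals Xs => hdist hlam eXs hG hC hmin.
split; first by do 2!split => //; rewrite eXs.
have [n0 | n_gt0] := posnP n.
  exists 1; split => // X _ _; suff -> : X = Xs by [].
  by apply/matrixP => i; have := ltn_ord i; lia.
pose N : R := n%:R; have N_ge1 : 1 <= N by rewrite ler1n.
have [g g_gt0 gap] := distinct_entries_gap hdist.
have [eps eps_gt0 [eps_small QS_bound mu_bound]] := perturbation_scale g_gt0 d2_gt0 N_ge1.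
have N2_gt0 : 0 < N ^+ 2 by rewrite exprn_gt0 // (lt_le_trans ltr01 N_ge1).
exists (eps / N ^+ 2); split => [|X [hX [hGX hCX]] hdX]; first by rewrite divr_gt0.
have [hmu [Q [hQ eX]]] := symmx_spec_decomp hX.
move: hmu eX hCX; set mu := eigvals X => hmu eX hCX.
pose P := Qs^T *m Q; have hP : orthmx P := orthmxM (orthmxT hQs) hQ.
have hXs i j : `|(Xs - X) i j| <= eps / N ^+ 2.
  by rewrite -opprB mxE normrN; apply: le_trans (normr_le_frob _ i j) hdX.
have hPeps i j : `|lam 0 i - mu 0 j| * `|P i j| <= eps.
  rewrite -normrM orth_diag_sub_entry // -eXs -eX.
  have := mulmx_entry_le (mulmx_entry_le (fun i j => trmx_orthmx_entry_le1 i j hQs) hXs)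
    (fun i j => orthmx_entry_le1 i j hQ) i j.
  by rewrite mulr1 mul1r mulrA -expr2 mulrC divfK // gt_eqF.
have [S [hS hSmu hPS]] := perturbed_sign_fix hP hlam hmu g_gt0 gap hPeps eps_small.
have close := perturbed_eigvals_close hP hlam hmu g_gt0 gap hPeps eps_small.
have eQS : Q *m S *m diag_mx mu *m (Q *m S)^T = X.
  by rewrite eX trmx_mul -!mulmxA (mulmxA S) (mulmxA _ S^T) hSmu.
have feas : feas2 G C (Q *m S) mu by split; [exact: orthmxM | rewrite eQS].
have QS_close : frob (Q *m S - Qs) <= d2.
  have -> : Q *m S - Qs = Qs *m (P *m S - 1%:M).
    by rewrite mulmxBr mulmx1 /P !mulmxA hQs mul1mx.
  have hQs1 i j := orthmx_entry_le1 i j hQs.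
  apply: le_trans (frob_le _ (mulmx_entry_le hQs1 hPS)) _.
    by rewrite mul1r mulr_ge0 ?divr_ge0 ?mulr_ge0 // ltW.
  by rewrite natrM mul1r -mulrA.
have mu_close : frob (mu - lam) <= d2.
  have hml i j : `|(mu - lam) i j| <= N * eps by rewrite ord1 !mxE distrC close.
  apply: le_trans (frob_le _ hml) _; first by rewrite mulr_ge0 // ltW.
  by rewrite mul1n.
by have := hmin _ _ feas QS_close mu_close; rewrite /fobj eQS -eXs.
Qed.

End SpectralLocalMinima.

Theorem theorem1 (R : realType) (n q : nat)
  (F : 'M[R]_n -> R) (G : 'M[R]_n -> 'rV[R]_q) (C : set 'rV[R]_n)
  (hC : closed C) (Xs : 'M[R]_n)
  (hsym : symmx Xs)
  (hdist : forall i j : 'I_n, eigvals Xs 0 i = eigvals Xs 0 j -> i = j) :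
  (locmin1 F G C Xs <->
     exists Qs : 'M[R]_n, spec_decomp Xs Qs /\ locmin2 F G C Qs (eigvals Xs))
  /\
  ((exists Qs : 'M[R]_n, spec_decomp Xs Qs /\ locmin2 F G C Qs (eigvals Xs)) ->
     forall Qs : 'M[R]_n, spec_decomp Xs Qs -> locmin2 F G C Qs (eigvals Xs)).
Proof.
have back Qs : spec_decomp Xs Qs -> locmin2 F G C Qs (eigvals Xs) -> locmin1 F G C Xs.
  exact: locmin2_locmin1.
split; last by move=> [Qs0 [hQs0 /(back _ hQs0) h1]] Qs /(locmin1_locmin2 h1).
split; last by move=> [Qs [/back]].
have [_ [Qs hQs]] := symmx_spec_decomp hsym.
by move=> h1; exists Qs; split; last exact: locmin1_locmin2.
Qed.
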